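(* Assume the standing setup. Let $j_1,\dots,j_{d+1}\in[k]$. If $\alpha_{j_1},\dots,\alpha_{j_{d+1}}$ are linearly independent in $V_1$, then $\beta_{j_1},\dots,\beta_{j_{d+1}}$ are linearly independent in $V_2$.
   Context: Standing setup: $\mathbb{F}$ is a field of characteristic $0$; $W$ is a group with finite generating set $S=\{s_1,\dots,s_k\}$. A linear map on a finite-dimensional space is a (generalized) reflection if it is diagonalizable and $s-\operatorname{Id}$ has rank $1$; a reflection vector is a nonzero vector in $\operatorname{Im}(s-\operatorname{Id})$. $(V_1,\rho_1)$, $(V_2,\rho_2)$ are irreducible reflection representations of $(W,S)$ (each $s_i$ acts by a reflection), both of dimension $n$. For each $i\in[k]$, $\alpha_i\in V_1$ is a chosen reflection vector of $s_i$ with $s_i\alpha_i=\lambda_i\alpha_i$ and $\beta_i\in V_2$ a chosen reflection vector of $s_i$ with $s_i\beta_i=\mu_i\beta_i$. $d$ is an integer with $1\le d\le n-1$, and $\psi:\bigwedge^dV_1\to\bigwedge^dV_2$ is an isomorphism of $W$-modules ($W$ acting diagonally). *)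

From HB Require Import structures.
From mathcomp Require Import all_boot all_order all_algebra.

Set Implicit Arguments. Unset Strict Implicit. Unset Printing Implicit Defensive.
Import Order.TTheory GRing.Theory Num.Theory.
Local Open Scope ring_scope.

(* Vectors of an n-dimensional F-space are column vectors 'cV[F]_n;
   a linear representation of a (possibly infinite) group W is a group
   homomorphism rho : W -> 'M[F]_n, acting by  w . v := rho w *m v. *)

Definition generates (W : groupType) (k : nat) (s : 'I_k -> W) : Prop :=
  forall P : W -> Prop,
    P 1%g -> (forall x y, P x -> P y -> P (x * y)%g) ->
    (forall x, P x -> P (x^-1)%g) -> (forall i, P (s i)) ->
    forall w, P w.

Definition is_rep (F : fieldType) (W : groupType) (n : nat)
    (rho : W -> 'M[F]_n) : Prop :=
  rho 1%g = 1%:M /\ forall x y : W, rho (x * y)%g = rho x *m rho y.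

(* A subspace of F^n is encoded (mxalgebra style) by a matrix U whose rows,
   transposed, span it.  It is W-stable iff rho w maps it into itself. *)
Definition rep_stable (F : fieldType) (W : groupType) (n : nat)
    (rho : W -> 'M[F]_n) (U : 'M[F]_n) : Prop :=
  forall w : W, (U *m (rho w)^T <= U)%MS.

Definition rep_irreducible (F : fieldType) (W : groupType) (n : nat)
    (rho : W -> 'M[F]_n) : Prop :=
  (0 < n)%N /\
  forall U : 'M[F]_n, rep_stable rho U -> (\rank U = 0)%N \/ row_full U.

Definition is_reflection (F : fieldType) (n : nat) (M : 'M[F]_n) : Prop :=
  diagonalizable M /\ \rank (M - 1%:M) = 1%N.

Definition reflection_vector (F : fieldType) (n : nat) (M : 'M[F]_n)
    (v : 'cV[F]_n) : Prop :=
  v != 0 /\ (v^T <= (M - 1%:M)^T)%MS.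

(* The standard basis of /\^d F^n is e_{t_1} /\ ... /\ e_{t_d}
   indexed by strictly increasing d-tuples t of indices; [ext_index n d] is
   this finite index set.  The induced action of M on /\^d F^n has, in that
   basis, matrix entries the d x d minors of M (the d-th compound matrix). *)
Definition ext_index (n d : nat) :=
  {t : d.-tuple 'I_n | sorted (fun x y : 'I_n => (x < y)%N) t}.

Definition ext_dim (n d : nat) : nat := #|{: ext_index n d}|.

Definition ext_power (F : fieldType) (n d : nat) (M : 'M[F]_n)
  : 'M[F]_(ext_dim n d) :=
  \matrix_(a < ext_dim n d, b < ext_dim n d)
    \det (\matrix_(i < d, j < d)
            M (tnth (val (enum_val a)) i) (tnth (val (enum_val b)) j)).

Definition ext_W_iso (F : fieldType) (W : groupType) (n d : nat)
    (rho1 rho2 : W -> 'M[F]_n) (psi : 'M[F]_(ext_dim n d)) : Prop :=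
  psi \in unitmx /\
  forall w : W, psi *m ext_power d (rho1 w) = ext_power d (rho2 w) *m psi.

From HB Require Import structures.
From mathcomp Require Import all_boot all_order all_algebra perm.
Set Implicit Arguments. Unset Strict Implicit. Unset Printing Implicit Defensive.
Import Order.TTheory GRing.Theory Num.Theory.
Local Open Scope ring_scope.

(* Suppose the [alpha (j i)] are independent while the [beta (j i)] span a subspace U
   of dimension at most d.  Each [s (j i)] acts on V2 as the identity plus a rank-one
   map with image in U, so it stabilises U and acts on the line /\^d U by
   det (s|U) = mu (j i), which is not 1 since a diagonalizable s with (s - 1)^2 = 0 is
   the identity.  Through psi this gives a common eigenvector x of the
   /\^d (s (j i)) on /\^d V1, with eigenvalues different from 1.  In a basis of V1
   starting with the [alpha (j i)], the image of s (j i) - 1 is spanned by the i-th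
   basis vector, so /\^d (s (j i)) leaves the coordinate of x along e_S unchanged
   whenever i is not in S.  Every d-subset S misses one of the first d+1 indices,
   hence x = 0, a contradiction. *)

Lemma ltn_ord_trans n : transitive (fun x y : 'I_n => (x < y)%N).
Proof. by move=> x y z; apply: ltn_trans. Qed.

Lemma ltn_ord_irr n : irreflexive (fun x y : 'I_n => (x < y)%N).
Proof. by move=> x; rewrite ltnn. Qed.

Lemma sorted_enum_set n (A : {set 'I_n}) : sorted (fun x y : 'I_n => (x < y)%N) (enum A).
Proof.
rewrite /enum_mem -enumT; apply: sorted_filter; first exact: ltn_trans.
by have := iota_ltn_sorted 0 n; rewrite -val_enum_ord sorted_map.
Qed.

Section ExtIndex.
Variables n d : nat.
Implicit Types S T : ext_index n d.

Lemma ext_index_uniq S : uniq (val S).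
Proof. exact: (sorted_uniq (@ltn_ord_trans n) (@ltn_ord_irr n) (valP S)). Qed.

Lemma ext_index_subset_eq S T : {subset val S <= val T} -> S = T.
Proof.
move=> sub; have [_ eqST] := uniq_min_size (ext_index_uniq S) sub
  (eq_leq (etrans (size_tuple _) (esym (size_tuple _)))).
apply/val_inj/val_inj.
exact: (irr_sorted_eq (@ltn_ord_trans n) (@ltn_ord_irr n) (valP S) (valP T) eqST).
Qed.

Lemma ext_index_neq S T : S != T -> exists i, tnth (val S) i \notin val T.
Proof.
move=> neqST; apply/existsP; apply: contraR neqST => /existsPn notin.
apply/eqP/ext_index_subset_eq => _ /tnthP [i ->].
by have := notin i; rewrite negbK.
Qed.

Lemma ext_index_avoid (le_dn : (d.+1 <= n)%N) S :
  exists i : 'I_d.+1, widen_ord le_dn i \notin val S.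
Proof.
apply/existsP; apply: contraT; rewrite negb_exists => /forallP all_in.
have sub : {subset map (widen_ord le_dn) (enum 'I_d.+1) <= val S}.
  by move=> _ /mapP [i _ ->]; have := all_in i; rewrite negbK.
have := uniq_leq_size _ sub; rewrite size_map size_enum_ord size_tuple ltnn; apply.
by rewrite map_inj_uniq ?enum_uniq // => i j /(congr1 val) eq_ij; apply: val_inj.
Qed.

End ExtIndex.

Section SortedFactorization.
Variables n d : nat.
Implicit Types (S : ext_index n d) (s : 'S_d).

Definition ext_compose S s : {ffun 'I_d -> 'I_n} := [ffun i => tnth (val S) (s i)].

Lemma ext_compose_injective S s : injective (ext_compose S s).
Proof.
move=> i j; rewrite !ffunE => /(tuple_uniqP _ (ext_index_uniq S)).
exact: perm_inj.
Qed.

Lemma ext_compose_inj : injective (fun p : ext_index n d * 'S_d => ext_compose p.1 p.2).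
Proof.
move=> [S s] [T t] /= /ffunP eqST.
have eq_ST : S = T.
  apply: ext_index_subset_eq => _ /tnthP [k ->].
  by have := eqST (s^-1 k)%g; rewrite !ffunE permKV => ->; apply: mem_tnth.
subst T; congr pair; apply/permP => i.
by have := eqST i; rewrite !ffunE => /(tuple_uniqP _ (ext_index_uniq S)).
Qed.

Lemma ext_compose_onto (f : {ffun 'I_d -> 'I_n}) :
  injective f -> exists S s, ext_compose S s = f.
Proof.
move=> f_inj; set A := [set f i | i : 'I_d].
have sizeA : size (enum A) == d by rewrite -cardE card_imset // card_ord.
pose S : ext_index n d := exist _ (Tuple sizeA) (sorted_enum_set A).
have /tuple_permP [s fS] : perm_eq [tuple f i | i < d] (val S).
  apply: uniq_perm; first by rewrite map_inj_uniq ?enum_uniq.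
    exact: ext_index_uniq.
  move=> x; rewrite mem_enum.
  by apply/mapP/imsetP => -[i _ ->]; exists i; rewrite ?mem_enum.
exists S, s; apply/ffunP => i; rewrite ffunE.
by have := congr1 (nth (f i) ^~ i) fS; rewrite -!tnth_nth !tnth_mktuple.
Qed.

End SortedFactorization.

Section Determinants.
Variable R : comPzRingType.

Lemma det_mulmx_ffun_sum n d (X : 'M[R]_(d, n)) (Y : 'M[R]_(n, d)) :
  \det (X *m Y) = \sum_(f : {ffun 'I_d -> 'I_n})
     \det (\matrix_(i, j) Y (f i) j) * \prod_i X i (f i).
Proof.
pose G s i j := X i j * Y j (s i).
transitivity (\sum_(s : 'S_d) \sum_(f : {ffun 'I_d -> 'I_n})
                (-1) ^+ s * \prod_i G s i (f i)).
  apply: eq_bigr => s _; rewrite -big_distrr -(bigA_distr_bigA (G s)) /=.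
  by congr (_ * _); apply: eq_bigr => i _; rewrite mxE.
rewrite exchange_big; apply: eq_bigr => f _.
rewrite /determinant big_distrl /=; apply: eq_bigr => s _.
rewrite -mulrA; congr (_ * _); rewrite /G big_split /= mulrC; congr (_ * _).
by apply: eq_bigr => i _; rewrite mxE.
Qed.

(* Non-injective f give determinants with two equal rows, and injective f factor
   uniquely as [ext_compose S s]. *)
Theorem cauchy_binet n d (X : 'M[R]_(d, n)) (Y : 'M[R]_(n, d)) :
  \det (X *m Y) = \sum_(S : ext_index n d)
    \det (\matrix_(i, j) X i (tnth (val S) j)) *
    \det (\matrix_(i, j) Y (tnth (val S) i) j).
Proof.
rewrite det_mulmx_ffun_sum (bigID (fun f : {ffun 'I_d -> 'I_n} => injectiveb f)) /=.
rewrite [X in _ + X]big1 ?addr0 => [|f /injectivePn [i1 [i2 Di12 Ef12]]]; last first.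
  by rewrite (determinant_alternate Di12) ?mul0r // => j; rewrite !mxE Ef12.
pose h (p : ext_index n d * 'S_d) := ext_compose p.1 p.2.
rewrite (eq_bigl (mem (h @: setT))) => [|f]; last first.
  apply/injectiveP/imsetP => [/ext_compose_onto [S [s <-]] | [[S s] _ ->]].
    by exists (S, s).
  exact: ext_compose_injective.
rewrite big_imset /=; last by move=> p q _ _; apply: ext_compose_inj.
rewrite (eq_bigl xpredT) => [|p]; last by rewrite in_setT.
rewrite -(pair_bigA _ (fun S s =>
  \det (\matrix_(i, j) Y (ext_compose S s i) j) * \prod_i X i (ext_compose S s i))).
apply: eq_bigr => S _.
set YS := \matrix_(i, j) Y (tnth (val S) i) j.
rewrite [RHS]mulrC [\det (\matrix_(i, j) X _ _)]/determinant big_distrr /=.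
apply: eq_bigr => s _.
have -> : \matrix_(i, j) Y (ext_compose S s i) j = row_perm s YS.
  by apply/matrixP => i j; rewrite !mxE ffunE.
rewrite row_permE det_mulmx det_perm mulrCA mulrA; congr (_ * _).
by apply: eq_bigr => i _; rewrite !mxE ffunE.
Qed.

Lemma det_add1_rank1 d (u : 'cV[R]_d) (v : 'rV[R]_d) :
  \det (1%:M + u *m v) = 1 + (v *m u) 0 0.
Proof.
pose L1 : 'M[R]_(d + 1) := block_mx 1%:M 0 v 1%:M.
pose L2 : 'M[R]_(d + 1) := block_mx 1%:M 0 (- v) 1%:M.
pose B : 'M[R]_(d + 1) := block_mx (1%:M + u *m v) u 0 1%:M.
have E : L1 *m B *m L2 = block_mx 1%:M u 0 (1%:M + v *m u).
  rewrite /L1 /B /L2 !mulmx_block !mul1mx !mul0mx !mulmx0 !mulmx1 !addr0 !add0r.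
  congr block_mx.
  - by rewrite mulmxN addrK.
  - by rewrite mulmxDr mulmx1 mulmxDl mul1mx !mulmxN mulmxA addrA addrK subrr.
  - by rewrite addrC.
have := congr1 determinant E.
rewrite !det_mulmx !det_lblock !det_ublock !det1 !mul1r !mulr1 det_mx11 => ->.
by rewrite !mxE.
Qed.

End Determinants.

Section ExteriorPower.
Variables (F : fieldType) (n d : nat).
Implicit Types (M N P : 'M[F]_n) (S T : ext_index n d).

Definition ext_minor M S T : F :=
  \det (\matrix_(i < d, j < d) M (tnth (val S) i) (tnth (val T) j)).

Lemma ext_powerE M a b : ext_power d M a b = ext_minor M (enum_val a) (enum_val b).
Proof. by rewrite mxE. Qed.

Lemma ext_minor_id_rows M S T :
  (forall i c, M (tnth (val S) i) c = (tnth (val S) i == c)%:R) ->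
  ext_minor M S T = (S == T)%:R.
Proof.
move=> idS; rewrite /ext_minor; have [<-|neqST] := eqVneq S T.
  rewrite -[RHS](det1 F d); congr (\det _); apply/matrixP => i j.
  by rewrite !mxE idS (inj_eq (tuple_uniqP _ (ext_index_uniq S))).
have [i notinT] := ext_index_neq neqST.
rewrite (expand_det_row _ i) big1 // => j _; rewrite mxE idS.
by case: eqP => [eqij|_]; [move: notinT; rewrite eqij mem_tnth | rewrite mul0r].
Qed.

Lemma ext_power1 : ext_power d (1%:M : 'M[F]_n) = 1%:M.
Proof.
apply/matrixP => a b; rewrite ext_powerE ext_minor_id_rows => [|i c]; last by rewrite mxE.
by rewrite mxE (inj_eq enum_val_inj).
Qed.

Lemma ext_powerM M N : ext_power d (M *m N) = ext_power d M *m ext_power d N.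
Proof.
apply/matrixP => a b; rewrite ext_powerE mxE /ext_minor.
set X := \matrix_(i < d, k < n) M (tnth (val (enum_val a)) i) k.
set Y := \matrix_(k < n, j < d) N k (tnth (val (enum_val b)) j).
have -> : \matrix_(i, j) (M *m N) (tnth (val (enum_val a)) i)
                                   (tnth (val (enum_val b)) j) = X *m Y.
  by apply/matrixP => i j; rewrite !mxE; apply: eq_bigr => k _; rewrite !mxE.
rewrite cauchy_binet (big_enum_val (A := predT)) /=.
apply: eq_bigr => c _; rewrite !ext_powerE /ext_minor.
by congr (_ * _); congr (\det _); apply/matrixP => i j; rewrite !mxE.
Qed.

Lemma ext_power_unitmx P : P \in unitmx -> ext_power d P \in unitmx.
Proof.
move=> Pu; have [] // := @mulmx1_unit _ _ (ext_power d P) (ext_power d (invmx P)).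
by rewrite -ext_powerM mulmxV // ext_power1.
Qed.

Lemma ext_power_conjmx P M : P \in unitmx ->
  ext_power d P *m ext_power d (invmx P *m M *m P) = ext_power d M *m ext_power d P.
Proof. by move=> Pu; rewrite -!ext_powerM !mulmxA mulmxV // mul1mx. Qed.

Lemma ext_power_coord_id_rows M r0 (x : 'cV[F]_(ext_dim n d)) (a : 'I_(ext_dim n d)) :
  (forall r c, r != r0 -> M r c = (r == c)%:R) -> r0 \notin val (enum_val a) ->
  (ext_power d M *m x) a 0 = x a 0.
Proof.
move=> idM r0_notin; have idS b : ext_power d M a b = (a == b)%:R.
  rewrite ext_powerE ext_minor_id_rows ?(inj_eq enum_val_inj) // => i c.
  by apply: idM; apply: contraNneq r0_notin => <-; apply: mem_tnth.
rewrite mxE (bigD1 a) //= big1 => [|b neq_ba]; first by rewrite idS eqxx mul1r addr0.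
by rewrite idS eq_sym (negPf neq_ba) mul0r.
Qed.

Lemma sorted_widen_ord (le_dn : (d <= n)%N) :
  sorted (fun x y : 'I_n => (x < y)%N) [tuple widen_ord le_dn i | i < d].
Proof.
by rewrite /= sorted_map; have := iota_ltn_sorted 0 d; rewrite -val_enum_ord sorted_map.
Qed.

Definition ext_init (le_dn : (d <= n)%N) : ext_index n d :=
  exist (fun t : d.-tuple 'I_n => sorted (fun x y : 'I_n => (x < y)%N) t) _
    (sorted_widen_ord le_dn).

Definition ext_init_vec (le_dn : (d <= n)%N) : 'cV[F]_(ext_dim n d) :=
  delta_mx (enum_rank (ext_init le_dn)) 0.

Lemma tnth_ext_init le_dn k : tnth (val (ext_init le_dn)) k = widen_ord le_dn k.
Proof. exact: tnth_mktuple. Qed.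

Lemma ext_init_vec_neq0 le_dn : ext_init_vec le_dn != 0.
Proof.
apply/negP => /eqP/matrixP/(_ (enum_rank (ext_init le_dn)) 0).
by rewrite !mxE !eqxx => /eqP; rewrite oner_eq0.
Qed.

Lemma ext_init_neq le_dn S : S != ext_init le_dn -> exists k, (d <= tnth (val S) k)%N.
Proof.
move=> neqS; have [k notin] := ext_index_neq neqS; exists k.
rewrite leqNgt; apply: contra notin => lt_d; apply/tnthP; exists (Ordinal lt_d).
by apply: val_inj; rewrite tnth_ext_init.
Qed.

Lemma ext_power_init_eigenvector le_dn M :
  (forall r c : 'I_n, (c < d)%N -> (d <= r)%N -> M r c = 0) ->
  ext_power d M *m ext_init_vec le_dn =
    ext_minor M (ext_init le_dn) (ext_init le_dn) *: ext_init_vec le_dn.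
Proof.
move=> triM; set S0 := ext_init le_dn; apply/matrixP => a z.
rewrite !mxE (bigD1 (enum_rank S0)) //= big1 => [|b /negPf nb]; last first.
  by rewrite [ext_init_vec _ b z]mxE nb mulr0.
rewrite addr0 ext_powerE enum_rankK /ext_init_vec !mxE (ord1 z) !eqxx andbT mulr1 -/S0.
have [->|neq_a] := eqVneq a (enum_rank S0); first by rewrite enum_rankK mulr1.
rewrite mulr0; have [k dk] : exists k, (d <= tnth (val (enum_val a)) k)%N.
  by apply: ext_init_neq; apply: contra neq_a => /eqP eq_a; rewrite /S0 -eq_a enum_valK.
rewrite /ext_minor (expand_det_row _ k) big1 // => j _.
by rewrite mxE triM ?mul0r // /S0 tnth_ext_init; exact: (ltn_ord j).
Qed.

Lemma ext_power_init_eigenvector_add1_rank1 le_dn (u : 'cV[F]_n) (h : 'rV[F]_n) :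
  (forall r : 'I_n, (d <= r)%N -> u r 0 = 0) ->
  ext_power d (1%:M + u *m h) *m ext_init_vec le_dn =
    (1 + (h *m u) 0 0) *: ext_init_vec le_dn.
Proof.
move=> u_init; rewrite ext_power_init_eigenvector => [|r c lt_cd le_dr]; last first.
  rewrite !mxE big_ord1 u_init // mul0r addr0.
  by case: eqP => // eq_rc; move: lt_cd; rewrite -eq_rc ltnNge le_dr.
congr (_ *: _); rewrite /ext_minor.
set S0 := ext_init le_dn.
have -> : \matrix_(i, j) (1%:M + u *m h) (tnth (val S0) i) (tnth (val S0) j) =
    1%:M + (\col_k u (tnth (val S0) k) 0) *m (\row_k h 0 (tnth (val S0) k)).
  apply/matrixP => i j; rewrite !mxE !big_ord1 !mxE.
  by rewrite (inj_eq (tuple_uniqP _ (ext_index_uniq S0))).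
rewrite det_add1_rank1; congr (1 + _); rewrite !mxE.
rewrite (bigID (fun r : 'I_n => (r < d)%N)) /= [X in _ + X]big1 => [|r]; last first.
  by rewrite -leqNgt => /u_init ->; rewrite mulr0.
rewrite addr0 (big_ord_narrow le_dn); apply: eq_bigr => k _.
by rewrite !mxE tnth_ext_init.
Qed.

End ExteriorPower.

Section RankOnePerturbations.
Variable F : fieldType.

Lemma conjmx_add1_rank1 n (P : 'M[F]_n) (u : 'cV_n) (g : 'rV_n) : P \in unitmx ->
  invmx P *m (1%:M + u *m g) *m P = 1%:M + (invmx P *m u) *m (g *m P).
Proof. by move=> Pu; rewrite mulmxDr mulmxDl mulmx1 mulVmx // !mulmxA. Qed.

Lemma add1_rank1_eigenvalue n (u : 'cV[F]_n) (h : 'rV[F]_n) c :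
  u != 0 -> (1%:M + u *m h) *m u = c *: u -> c = 1 + (h *m u) 0 0.
Proof.
move=> nz_u eig; have : (c - (1 + (h *m u) 0 0)) *: u = 0.
  by rewrite scalerBl -eig mulmxDl mul1mx -mulmxA [X in u *m X]mx11_scalar
             mul_mx_scalar scalerDl scale1r subrr.
by move/eqP; rewrite scaler_eq0 (negPf nz_u) orbF subr_eq0 => /eqP.
Qed.

Lemma diagonalizable_sqr_eq0 n (M : 'M[F]_n) (a : F) :
  diagonalizable M -> (M - a%:M) *m (M - a%:M) = 0 -> M = a%:M.
Proof.
move=> [P Pu /(diagonalizable_forP _ Pu) offdiag] sqr0.
pose E := P *m (M - a%:M) *m invmx P.
have offE i j : i != j -> E i j = 0.
  move=> neq_ij; rewrite /E mulmxBr mulmxBl mul_mx_scalar -scalemxAl mulmxV //.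
  by rewrite scalemx1 mxE offdiag // !mxE (negPf neq_ij) oppr0 addr0.
have EE : E *m E = 0.
  by rewrite /E !mulmxA mulmxKV // -(mulmxA P) sqr0 mulmx0 mul0mx.
have E0 : E = 0.
  apply/matrixP => i j; rewrite [RHS]mxE; have [<-|] := eqVneq i j; last exact: offE.
  move/matrixP: EE => /(_ i i); rewrite mxE (bigD1 i) //= big1 ?addr0 ?mxE.
    by move/eqP; rewrite mulf_eq0 orbb => /eqP.
  by move=> k neq_ki; rewrite offE ?mul0r // eq_sym.
have : M - a%:M = invmx P *m E *m P by rewrite /E !mulmxA mulVmx // mul1mx mulmxKV.
by rewrite E0 mulmx0 mul0mx => /eqP; rewrite subr_eq0 => /eqP.
Qed.

Lemma reflection_vector_rank1 n (M : 'M[F]_n) (v : 'cV_n) :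
  \rank (M - 1%:M) = 1%N -> reflection_vector M v ->
  exists g : 'rV[F]_n, M = 1%:M + v *m g.
Proof.
move=> rank1 [nz_v sub_v]; have := (mxrank_leqif_sup sub_v).2.
have nz_vT : v^T != 0 by rewrite trmx_eq0.
rewrite [\rank (M - _)^T]mxrank_tr rank1 rank_rV nz_vT eqxx => /esym/submxP [D eqD].
by exists D^T; rewrite -[M](subrK 1%:M) -[M - _]trmxK eqD trmx_mul trmxK addrC.
Qed.

Lemma reflection_eigenvalue_neq1 n (M : 'M[F]_n) v mu :
  is_reflection M -> reflection_vector M v -> M *m v = mu *: v -> mu != 1.
Proof.
move=> [diagM rank1] refl_v Mv; apply/eqP => mu1; subst mu.
have [g eqM] := reflection_vector_rank1 rank1 refl_v.
have gv0 : g *m v = 0.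
  move: Mv; rewrite {1}eqM => /(add1_rank1_eigenvalue refl_v.1).
  move=> /(congr1 (fun t => t - 1)); rewrite subrr addrAC subrr add0r => gv0.
  by rewrite [g *m v]mx11_scalar -gv0 -scalemx1 scale0r.
have eqN : M - 1%:M = v *m g by rewrite eqM addrAC subrr add0r.
have M1 : M = 1%:M.
  apply: diagonalizable_sqr_eq0 => //.
  by rewrite eqN -mulmxA (mulmxA g) gv0 mul0mx mulmx0.
by move: rank1; rewrite M1 subrr mxrank0.
Qed.

End RankOnePerturbations.

Section Bases.
Variable F : fieldType.

Lemma row_free_pid_unitmx m n (A : 'M[F]_(m, n)) :
  row_free A -> exists2 Q : 'M_n, Q \in unitmx & pid_mx m *m Q = A.
Proof.
move=> freeA; have le_mn : (m <= n)%N by rewrite -(eqP freeA) rank_leq_col.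
have pidA : (pid_mx m : 'M_(m, n)) *m ((pid_mx m : 'M_(n, m)) *m A) = A.
  by rewrite mulmxA pid_mx_id // pid_mx_1 mul1mx.
have [Q Qu eqQ] : {Q : 'M_n | Q \in unitmx &
    (pid_mx m : 'M_(m, n)) *m ((pid_mx m : 'M_(n, m)) *m A) = pid_mx m *m Q}.
  by apply: complete_unitmx; rewrite pidA rank_pid_mx // (eqP freeA).
by exists Q => //; rewrite -eqQ pidA.
Qed.

Lemma mulmx_invmx_row_ebase m n (B : 'M[F]_(m, n)) i (c : 'I_n) :
  (\rank B <= c)%N -> (B *m invmx (row_ebase B)) i c = 0.
Proof.
move=> le_rc; rewrite -{1}(mulmx_ebase B) mulmxK ?row_ebase_unit //.
rewrite mxE big1 // => l _; rewrite mxE.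
by case: eqP => [->|]; rewrite ?ltnNge ?le_rc ?andbF mulr0.
Qed.

End Bases.

Section CommonEigenvectors.
Variable F : fieldType.

Lemma ext_common_eigenvector_of_rank_le m n d (R : 'I_m -> 'M[F]_n)
    (b : 'I_m -> 'cV[F]_n) (c : 'I_m -> F) :
  (d <= n)%N -> (\rank (\matrix_i (b i)^T) <= d)%N ->
  (forall i, exists g, R i = 1%:M + b i *m g) ->
  (forall i, b i != 0) -> (forall i, R i *m b i = c i *: b i) ->
  exists2 x : 'cV[F]_(ext_dim n d), x != 0 &
    forall i, ext_power d (R i) *m x = c i *: x.
Proof.
move=> le_dn rankB rank1R nz_b eig_b; set B := \matrix_i (b i)^T.
set P := (row_ebase B)^T; have Pu : P \in unitmx by rewrite unitmx_tr row_ebase_unit.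
have PuE : ext_power d P \in unitmx by apply: ext_power_unitmx.
have Pb_init i (r : 'I_n) : (d <= r)%N -> (invmx P *m b i) r 0 = 0.
  move=> le_dr; rewrite -[RHS](mulmx_invmx_row_ebase i (leq_trans rankB le_dr)).
  by rewrite /P -trmx_inv !mxE; apply: eq_bigr => k _; rewrite !mxE mulrC.
exists (ext_power d P *m ext_init_vec F le_dn) => [|i].
  apply: contraNneq (ext_init_vec_neq0 F le_dn) => Pe0.
  by rewrite -(mulKmx PuE (ext_init_vec F le_dn)) Pe0 mulmx0.
have [g eqR] := rank1R i.
rewrite mulmxA -ext_power_conjmx // eqR conjmx_add1_rank1 // -mulmxA.
rewrite ext_power_init_eigenvector_add1_rank1 => [|r]; last exact: Pb_init.
rewrite -scalemxAr mulmxA mulmxK //.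
congr (_ *: _); symmetry; apply: add1_rank1_eigenvalue (nz_b i) _.
by rewrite -eqR eig_b.
Qed.

Lemma ext_common_eigenvector_eq0_of_row_free n d (R : 'I_d.+1 -> 'M[F]_n)
    (a : 'I_d.+1 -> 'cV[F]_n) (c : 'I_d.+1 -> F) (x : 'cV[F]_(ext_dim n d)) :
  row_free (\matrix_i (a i)^T) -> (forall i, exists g, R i = 1%:M + a i *m g) ->
  (forall i, c i != 1) -> (forall i, ext_power d (R i) *m x = c i *: x) -> x = 0.
Proof.
move=> freeA rank1R c_neq1 eig_x.
have le_dn : (d.+1 <= n)%N by rewrite -(eqP freeA) rank_leq_col.
have [Q Qu eqQ] := row_free_pid_unitmx freeA.
set P := Q^T; have Pu : P \in unitmx by rewrite unitmx_tr.
have PuE : ext_power d P \in unitmx by apply: ext_power_unitmx.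
have Pa i (r : 'I_n) : r != widen_ord le_dn i -> (invmx P *m a i) r 0 = 0.
  have PA : invmx P *m (\matrix_i (a i)^T)^T = pid_mx d.+1.
    by rewrite -eqQ trmx_mul tr_pid_mx mulKmx.
  move=> neq_ri; transitivity ((invmx P *m (\matrix_i (a i)^T)^T) r i).
    by rewrite !mxE; apply: eq_bigr => k _; rewrite !mxE.
  rewrite PA mxE (_ : (r == i :> nat) = false) //.
  by apply/negP => /eqP eq_ri; case/eqP: neq_ri; apply: val_inj.
set y := invmx (ext_power d P) *m x.
suff y0 : y = 0 by rewrite -(mulKVmx PuE x) -/y y0 mulmx0.
apply/matrixP => k z; rewrite (ord1 z) [RHS]mxE.
have [i notin] := ext_index_avoid le_dn (enum_val k).
have [g eqR] := rank1R i.
have eig_y : ext_power d (invmx P *m R i *m P) *m y = c i *: y.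
  apply: (can_inj (mulKmx PuE)); rewrite mulmxA ext_power_conjmx // -mulmxA.
  by rewrite mulKVmx // eig_x -scalemxAr mulKVmx.
move/matrixP/(_ k 0): eig_y; rewrite (ext_power_coord_id_rows _ _ notin); last first.
  move=> r col neq_ri; rewrite eqR conjmx_add1_rank1 // !mxE big_ord1 Pa //.
  by rewrite mul0r addr0.
rewrite [(c i *: y) k 0]mxE => /eqP; rewrite -subr_eq0 -{1}[y k 0]mul1r -mulrBl mulf_eq0.
by rewrite subr_eq0 eq_sym (negPf (c_neq1 i)) => /eqP.
Qed.

End CommonEigenvectors.

Unset Implicit Arguments.

Theorem lemma5p4
  (F : fieldType) (F_char0 : [pchar F] =i pred0)
  (W : groupType) (k : nat) (s : 'I_k -> W) (gen : generates s)
  (n : nat) (rho1 rho2 : W -> 'M[F]_n)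
  (rep1 : is_rep rho1) (rep2 : is_rep rho2)
  (irr1 : rep_irreducible rho1) (irr2 : rep_irreducible rho2)
  (refl1 : forall i, is_reflection (rho1 (s i)))
  (refl2 : forall i, is_reflection (rho2 (s i)))
  (alpha beta : 'I_k -> 'cV[F]_n) (lambda mu : 'I_k -> F)
  (ha : forall i, reflection_vector (rho1 (s i)) (alpha i))
  (hb : forall i, reflection_vector (rho2 (s i)) (beta i))
  (hla : forall i, rho1 (s i) *m alpha i = lambda i *: alpha i)
  (hmb : forall i, rho2 (s i) *m beta i = mu i *: beta i)
  (d : nat) (hd1 : (1 <= d)%N) (hd2 : (d <= n.-1)%N)
  (psi : 'M[F]_(ext_dim n d)) (hpsi : ext_W_iso rho1 rho2 psi)
  (j : 'I_d.+1 -> 'I_k) :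
  row_free (\matrix_(i < d.+1) (alpha (j i))^T) ->
  row_free (\matrix_(i < d.+1) (beta (j i))^T).
Proof.
move=> freeA; apply/idPn => depB; have [psiu psiW] := hpsi.
have le_dn : (d <= n)%N := leq_trans hd2 (leq_pred n).
have rankB : (\rank (\matrix_(i < d.+1) (beta (j i))^T) <= d)%N.
  by rewrite -ltnS ltn_neqAle rank_leq_row andbT.
have [x nz_x eig_x] := ext_common_eigenvector_of_rank_le le_dn rankB
  (fun i => reflection_vector_rank1 (refl2 (j i)).2 (hb (j i)))
  (fun i => (hb (j i)).1) (fun i => hmb (j i)).
have eig_psix i : ext_power d (rho1 (s (j i))) *m (invmx psi *m x) =
                  mu (j i) *: (invmx psi *m x).
  apply: (can_inj (mulKmx psiu)); rewrite mulmxA psiW -mulmxA !mulKVmx //.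
  by rewrite eig_x -scalemxAr mulKVmx.
have psix0 := ext_common_eigenvector_eq0_of_row_free freeA
  (fun i => reflection_vector_rank1 (refl1 (j i)).2 (ha (j i)))
  (fun i => reflection_eigenvalue_neq1 (refl2 (j i)) (hb (j i)) (hmb (j i))) eig_psix.
by move: nz_x; rewrite -(mulKVmx psiu x) psix0 mulmx0 eqxx.
Qed.
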